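(* Let $G$ be a tree. Then the independence complex $\Delta(G)$ is sortable if and only if $G$ is a path graph.
   Context: The independence complex $\Delta(G)$ is the simplicial complex of all independent sets of $G$. For finite $F,G\subset\mathbb{N}$ with $|F|=r,|G|=s$, write $\mathbf{x}^F\mathbf{x}^G=x_{i_1}\cdots x_{i_{r+s}}$ with $i_1\le\cdots\le i_{r+s}$ (where $\mathbf{x}^F=\prod_{i\in F}x_i$) and set $\mathrm{sort}(F,G)=(\{i_k:k\text{ odd}\},\{i_k:k\text{ even}\})$. A simplicial complex $\Delta$ with $V(\Delta)\subset\mathbb{N}$ is sortable with respect to the given labeling if $\mathrm{sort}(F,G)\in\Delta\times\Delta$ for all $F,G\in\Delta$; $\Delta$ is sortable if it is sortable with respect to some labeling of its vertices by distinct integers. *)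

From mathcomp Require Import all_boot.
Set Implicit Arguments. Unset Strict Implicit. Unset Printing Implicit Defensive.

(* A finite simple graph is a symmetric irreflexive relation e on a finType T. *)

Definition is_tree (T : finType) (e : rel T) : Prop :=
  [/\ 0 < #|T|,
      (forall x y : T, connect e x y) &
      (forall c : seq T, uniq c -> 2 < size c -> ~~ cycle e c)].

Definition is_path_graph (T : finType) (e : rel T) : Prop :=
  exists f : 'I_#|T| -> T, bijective f /\
    forall i j : 'I_#|T|, e (f i) (f j) = ((i.+1 == j) || (j.+1 == i)).

(* Independent sets of G = faces of the independence complex Delta(G). *)
Definition independent (T : finType) (e : rel T) (A : {set T}) : Prop :=
  forall x y, x \in A -> y \in A -> ~~ e x y.

(* sort(F,G): merge the labels of F and G (as a multiset) into i_1 <= ... <= i_{r+s};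
   first component = entries at odd positions (1-indexed), second = even positions. *)
Definition sort_pair (F G : seq nat) : seq nat * seq nat :=
  let s := sort leq (F ++ G) in
  ([seq nth 0 s i | i <- iota 0 (size s) & ~~ odd i],
   [seq nth 0 s i | i <- iota 0 (size s) & odd i]).

Definition lab_face (T : finType) (e : rel T) (lab : T -> nat) (L : seq nat) : Prop :=
  {subset L <= codom lab} /\ independent e [set v | lab v \in L].

Definition sortable_wrt (T : finType) (e : rel T) (lab : T -> nat) : Prop :=
  forall F G : {set T}, independent e F -> independent e G ->
    lab_face e lab (sort_pair [seq lab v | v <- enum F] [seq lab v | v <- enum G]).1 /\
    lab_face e lab (sort_pair [seq lab v | v <- enum F] [seq lab v | v <- enum G]).2.

Definition indep_complex_sortable (T : finType) (e : rel T) : Prop :=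
  exists lab : T -> nat, injective lab /\ sortable_wrt e lab.

(* (<=) Label the vertices of a path graph by their positions.  Independent
   sets are then label sets with no two consecutive integers.  If A and B are
   two such sets, every window {k, k+1} meets A ++ B at most twice, so in the
   sorted merge of A ++ B two entries whose values differ by one sit at
   adjacent positions; hence the odd-position and even-position parts again
   contain no consecutive integers, i.e. they are independent.

   (=>) A tree has no triangles, so a vertex v with three neighbours a, b, c
   yields F = {v} and G = {a, b, c}, both independent.  Whatever the labels,
   the four-element merge puts lab v in the same part as the label of one of
   a, b, c, producing an edge inside a face.  So a sortable tree has maximum
   degree at most 2.  In such a graph any path can be extended at an end as
   long as it has an outgoing edge; a maximal path is closed under adjacency,
   hence spans the connected graph, and acyclicity forbids chords, so the
   graph is the path graph read off along this path. *)

From mathcomp Require Import all_boot zify.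
Set Implicit Arguments. Unset Strict Implicit. Unset Printing Implicit Defensive.

Definition no_consecutive (A : seq nat) : Prop :=
  forall k, ~~ ((k \in A) && (k.+1 \in A)).

Lemma count_window_le1 (A : seq nat) k : uniq A -> no_consecutive A ->
  count (predU (pred1 k) (pred1 k.+1)) A <= 1.
Proof.
move=> uA nA; have := count_predUI (pred1 k) (pred1 k.+1) A.
rewrite !count_uniq_mem //.
by have := nA k; case: (k \in A); case: (k.+1 \in A) => //= _; lia.
Qed.

(* In the sorted merge of two such sets, entries with consecutive values
   occupy consecutive positions: otherwise the window {k, k+1} would be hit
   three times. *)
Lemma merge_consecutive_adjacent (A B : seq nat) :
  uniq A -> uniq B -> no_consecutive A -> no_consecutive B ->
  let s := sort leq (A ++ B) in
  forall p q, p < size s -> q < size s -> nth 0 s q = (nth 0 s p).+1 -> q = p.+1.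
Proof.
move=> uA uB nA nB s p q ps qs E.
have ss : sorted leq s by apply: sort_sorted; exact: leq_total.
have mono := sorted_leq_nth leq_trans leqnn 0 ss.
have pq : p < q.
  by rewrite ltnNge; apply/negP => qp; have := mono q p qs ps qp; rewrite E; lia.
case: (ltnP q p.+2) => [|qp2]; first by lia.
set k := nth 0 s p in E.
have p1s : p.+1 < size s by exact: leq_ltn_trans pq qs.
have lo := mono p p.+1 ps p1s (leqnSn p).
have hi := mono p.+1 q p1s qs pq; rewrite E in hi.
pose w := predU (pred1 k) (pred1 k.+1).
have count_merge : count w s = count w A + count w B.
  by rewrite -count_cat; apply/permP; rewrite perm_sort.
have tail_hit : 0 < count w (drop p.+2 s).
  rewrite -has_count; apply/hasP; exists (nth 0 s q); last by rewrite /w E /= eqxx orbT.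
  rewrite -[q](subnKC qp2) -nth_drop mem_nth // size_drop.
  exact: ltn_sub2r (leq_ltn_trans qp2 qs) qs.
have mid_hit : (nth 0 s p.+1 == k) || (nth 0 s p.+1 == k.+1).
  have [->|->] : nth 0 s p.+1 = k \/ nth 0 s p.+1 = k.+1 by lia.
  1,2: by rewrite eqxx ?orbT.
have : 3 <= count w s.
  rewrite -(cat_take_drop p s) count_cat (drop_nth 0 ps) (drop_nth 0 p1s) /=.
  rewrite mid_hit -/k eqxx /=; apply: leq_trans (leq_addl _ _).
  by rewrite !add1n !ltnS.
have wA : count w A <= 1 := count_window_le1 k uA nA.
have wB : count w B <= 1 := count_window_le1 k uB nB.
by rewrite count_merge; lia.
Qed.

Definition part (s : seq nat) (P : pred nat) : seq nat :=
  [seq nth 0 s i | i <- iota 0 (size s) & P i].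

Definition merge_part (A B : seq nat) (P : pred nat) : seq nat :=
  part (sort leq (A ++ B)) P.

Lemma sort_pairE (A B : seq nat) :
  sort_pair A B = (merge_part A B (fun i => ~~ odd i), merge_part A B odd).
Proof. by []. Qed.

Lemma merge_part_sub (A B : seq nat) (P : pred nat) : {subset merge_part A B P <= A ++ B}.
Proof.
move=> m /mapP[i]; rewrite mem_filter mem_iota /= add0n => /andP[_ si] ->.
by rewrite -(mem_sort leq) mem_nth.
Qed.

Lemma merge_part_no_consecutive (A B : seq nat) (P : pred nat) :
  uniq A -> uniq B -> no_consecutive A -> no_consecutive B ->
  (forall i, P i.+1 = ~~ P i) -> no_consecutive (merge_part A B P).
Proof.
move=> uA uB nA nB alt k; apply/negP => /andP[/mapP[i + Ei] /mapP[j + Ej]].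
rewrite !mem_filter !mem_iota /= !add0n => /andP[Pi si] /andP[Pj sj].
have ji : j = i.+1 by apply: (merge_consecutive_adjacent uA uB nA nB si sj); rewrite -Ei -Ej.
by move: Pj; rewrite ji alt Pi.
Qed.

(* (<=) A path graph, labelled by positions, has a sortable independence
   complex: independent sets are exactly the label sets without consecutive
   integers, and both parts of sort(F, G) are again such sets. *)
Lemma path_graph_sortable (T : finType) (e : rel T) :
  is_path_graph e -> indep_complex_sortable e.
Proof.
case=> f [[g fg gf] ef].
pose lab v := nat_of_ord (g v).
have lab_inj : injective lab by move=> x y /val_inj /(can_inj gf).
have e_lab x y : e x y = ((lab x).+1 == lab y) || ((lab y).+1 == lab x).
  by rewrite -{1}(gf x) -{1}(gf y) ef.
pose labs (H : {set T}) := [seq lab v | v <- enum H].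
have labs_uniq H : uniq (labs H) by rewrite map_inj_uniq ?enum_uniq.
have labs_indep H : independent e H -> no_consecutive (labs H).
  move=> iH k; apply/negP => /andP[/mapP[x + ->] /mapP[y + Ey]].
  rewrite !mem_enum => xH yH.
  by move: (iH x y xH yH); rewrite e_lab Ey eqxx.
exists lab; split => // F G iF iG.
have part_face (P : pred nat) : (forall i, P i.+1 = ~~ P i) ->
    lab_face e lab (merge_part (labs F) (labs G) P).
  move=> alt; split.
    by move=> m /merge_part_sub; rewrite mem_cat => /orP[] /mapP[x _ ->]; exact: codom_f.
  have nc := merge_part_no_consecutive (labs_uniq F) (labs_uniq G)
               (labs_indep F iF) (labs_indep G iG) alt.
  move=> x y; rewrite !inE e_lab => xP yP.
  by apply/norP; split; apply/negP => /eqP E;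
     [move: (nc (lab x)) | move: (nc (lab y))]; rewrite ?E ?xP ?yP.
by rewrite sort_pairE; split; apply: part_face => i /=; rewrite ?negbK.
Qed.

(* Among four distinct labels, each shares its alternating part with another:
   the parts of [:: s0; s1; s2; s3] are [:: s0; s2] and [:: s1; s3]. *)
Lemma part_partner (s : seq nat) m : uniq s -> size s = 4 -> m \in s ->
  exists2 m', m' \in s /\ m' != m &
    let even_part := part s (fun i => ~~ odd i) in let odd_part := part s odd in
    (m \in even_part /\ m' \in even_part) \/ (m \in odd_part /\ m' \in odd_part).
Proof.
case: s => [|s0 [|s1 [|s2 [|s3 []]]]] //= + _.
rewrite !inE !negb_or -!andbA => /and5P[n01 n02 n03 _ /andP[n12 /andP[n13 n23]]].
case/or4P => /eqP ->; rewrite /part /=.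
- by exists s2; rewrite ?inE ?eqxx ?orbT 1?eq_sym //; left.
- by exists s3; rewrite ?inE ?eqxx ?orbT 1?eq_sym //; right.
- by exists s0; rewrite ?inE ?eqxx ?orbT //; left.
- by exists s1; rewrite ?inE ?eqxx ?orbT //; right.
Qed.

Lemma lab_face_nonadj (T : finType) (e : rel T) (lab : T -> nat) (L : seq nat) x y :
  lab_face e lab L -> lab x \in L -> lab y \in L -> ~~ e x y.
Proof. by move=> [_ indL] xL yL; apply: indL; rewrite inE. Qed.

(* A sortable labelling forbids an induced claw: v adjacent to three
   pairwise non-adjacent vertices.  Take F = {v} and G = {a, b, c}. *)
Lemma sortable_no_induced_claw (T : finType) (e : rel T) (lab : T -> nat) :
  symmetric e -> irreflexive e -> injective lab -> sortable_wrt e lab ->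
  forall v a b c, e v a -> e v b -> e v c -> a != b -> a != c -> b != c ->
  ~~ e a b -> ~~ e a c -> ~~ e b c -> False.
Proof.
move=> e_sym e_irr lab_inj sortable v a b c va vb vc ab ac bc nab nac nbc.
have in_abc x : x \in [set a; b; c] -> [\/ x = a, x = b | x = c].
  by rewrite !inE -orbA => /or3P[] /eqP ->; [apply: Or31|apply: Or32|apply: Or33].
have indF : independent e [set v] by move=> x y; rewrite !inE => /eqP-> /eqP->; rewrite e_irr.
have indG : independent e [set a; b; c].
  by move=> x y /in_abc[]-> /in_abc[]->; rewrite ?e_irr // e_sym.
have v_abc : v \notin [set a; b; c].
  by apply/negP => /in_abc[] E; [move: va|move: vb|move: vc]; rewrite E e_irr.
pose labs (H : {set T}) := [seq lab x | x <- enum H].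
have labs_uniq : uniq (labs [set v] ++ labs [set a; b; c]).
  rewrite -map_cat map_inj_uniq // cat_uniq !enum_uniq andbT /=.
  by apply/hasP => -[x]; rewrite !mem_enum => + /set1P xv; rewrite xv (negbTE v_abc).
have labs_size : size (labs [set v] ++ labs [set a; b; c]) = 4.
  have -> : [set a; b; c] = a |: (b |: [set c]) by apply/setP => x; rewrite !inE orbA.
  rewrite size_cat !size_map -!cardE !cardsU1 !cards1 !inE.
  by rewrite (negbTE ab) (negbTE ac) (negbTE bc).
set s := sort leq (labs [set v] ++ labs [set a; b; c]).
have v_in : lab v \in s by rewrite mem_sort mem_cat map_f ?mem_enum ?set11.
have s_uniq : uniq s by rewrite sort_uniq.
have s_size : size s = 4 by rewrite size_sort.
have [m' [m'_in m'_v] shared] := part_partner s_uniq s_size v_in.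
have [w vw m'E] : exists2 w, e v w & m' = lab w.
  move: m'_in m'_v; rewrite mem_sort mem_cat => /orP[] /mapP[w]; rewrite mem_enum.
    by move=> /set1P-> ->; rewrite eqxx.
  by move=> /in_abc[]-> ->; [exists a | exists b | exists c].
have [face_even face_odd] := sortable _ _ indF indG.
rewrite m'E in shared; case: shared => -[vL wL].
- by move: vw; apply/negP/(lab_face_nonadj face_even).
- by move: vw; apply/negP/(lab_face_nonadj face_odd).
Qed.

Definition max_degree2 (T : finType) (e : rel T) : Prop :=
  forall x a b c, e x a -> e x b -> e x c -> a != b -> a != c -> b != c -> False.

Definition acyclic (T : finType) (e : rel T) : Prop :=
  forall c : seq T, uniq c -> 2 < size c -> ~~ cycle e c.

Lemma acyclic_no_triangle (T : finType) (e : rel T) :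
  symmetric e -> irreflexive e -> acyclic e ->
  forall x a b, e x a -> e x b -> a != b -> ~~ e a b.
Proof.
move=> e_sym e_irr acyc x a b xa xb ab; apply/negP => eab.
have neq y : e x y -> x != y by move=> xy; apply: contraTneq xy => <-; rewrite e_irr.
apply: (negP (acyc [:: x; a; b] _ isT)); last by rewrite /= xa eab e_sym xb.
by rewrite /= !inE negb_or neq // neq // ab.
Qed.

(* (=>, first half) An acyclic graph with a sortable independence complex
   has maximum degree at most 2: three neighbours would form an induced claw. *)
Lemma sortable_acyclic_max_degree2 (T : finType) (e : rel T) :
  symmetric e -> irreflexive e -> acyclic e -> indep_complex_sortable e -> max_degree2 e.
Proof.
move=> e_sym e_irr acyc [lab [lab_inj sortable]] x a b c xa xb xc ab ac bc.
have tri := acyclic_no_triangle e_sym e_irr acyc.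
exact: (sortable_no_induced_claw e_sym e_irr lab_inj sortable xa xb xc ab ac bc
          (tri _ _ _ xa xb ab) (tri _ _ _ xa xc ac) (tri _ _ _ xb xc bc)).
Qed.

Section MaximalPath.
Variables (T : finType) (e : rel T).
Hypotheses (e_sym : symmetric e) (deg2 : max_degree2 e).

(* An interior vertex of a path already has its two neighbours on the path,
   so by the degree bound all its neighbours lie on the path. *)
Lemma interior_neighbour_on_path (p : seq T) z i y :
  uniq p -> sorted e p -> 0 < i -> i.+1 < size p -> e (nth z p i) y -> y \in p.
Proof.
move=> up sp i_gt0 i_lt xy; apply/negPn/negP => yp.
have i_in : i < size p := ltnW i_lt.
have ip_in : i.-1 < size p := leq_ltn_trans (leq_pred i) i_in.
have prev := (sortedP z sp) i.-1; rewrite prednK // in prev.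
have next := (sortedP z sp) i i_lt.
apply: (deg2 _ next xy); first by rewrite e_sym; exact: prev.
- by rewrite nth_uniq //; lia.
- by apply: contraNneq yp => <-; rewrite mem_nth.
- by apply: contraNneq yp => <-; rewrite mem_nth.
Qed.

(* A path with an edge leaving it from x can be lengthened: x cannot be
   interior, so it is an end, and the new vertex is attached there. *)
Lemma extend_path (p : seq T) x y :
  uniq p -> sorted e p -> x \in p -> e x y -> y \notin p ->
  exists2 p', uniq p' /\ sorted e p' & size p' = (size p).+1.
Proof.
move=> up sp xp xy yp.
have i_lt : index x p < size p by rewrite index_mem.
have xi : nth x p (index x p) = x by rewrite nth_index.
have [i0 | i_gt0] := posnP (index x p).
  exists (y :: p); last by []; split; first by rewrite /= yp.
  rewrite i0 in xi; case: p sp xp xi {up yp i_lt i0} => // h t sp _ /= hx.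
  by subst x; rewrite /= e_sym xy.
have [interior | i_last] := ltnP (index x p).+1 (size p).
  by rewrite -xi in xy; rewrite (interior_neighbour_on_path up sp i_gt0 interior xy) in yp.
exists (rcons p y); last by rewrite size_rcons.
split; first by rewrite rcons_uniq yp.
have x_last : last x p = x.
  by rewrite -nth_last -[in RHS]xi (_ : (size p).-1 = index x p) //; lia.
case: p xp sp x_last {up yp i_lt xi i_gt0 i_last} => // h t _ sp /= x_last.
by rewrite rcons_path x_last xy andbT.
Qed.

(* Every path extends to a path closed under adjacency; the length is
   bounded by #|T|, so repeated extension terminates. *)
Lemma maximal_path (p : seq T) : uniq p -> sorted e p ->
  exists q : seq T, [/\ uniq q, sorted e q, size p <= size q &
    forall x y, x \in q -> e x y -> y \in q].
Proof.
have [n] := ubnP (#|T| - size p); elim: n p => // n IH p bound up sp.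
pose leaving (xy : T * T) := [&& xy.1 \in p, e xy.1 xy.2 & xy.2 \notin p].
have [[x y] /and3P[xp xy yp] | closed] := pickP leaving; last first.
  exists p; split => // x y xp xy; apply/negPn/negP => yp.
  by have := closed (x, y); rewrite /leaving /= xp xy yp.
have [p' [up' sp'] size_p'] := extend_path up sp xp xy yp.
have p_lt : size p < #|T| by rewrite -size_p' -(card_uniqP up') max_card.
have [|q [uq sq le_q closed_q]] := IH p' _ up' sp'; first by rewrite size_p'; lia.
by exists q; split => //; rewrite size_p' in le_q; exact: ltnW.
Qed.

End MaximalPath.

(* In an acyclic graph a path has no chords: an edge between positions i and
   j >= i + 2 would close the cycle formed by positions i, ..., j. *)
Lemma acyclic_path_chordless (T : finType) (e : rel T) (q : seq T) z :
  symmetric e -> acyclic e -> uniq q -> sorted e q ->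
  forall i j, i.+2 <= j -> j < size q -> ~~ e (nth z q i) (nth z q j).
Proof.
move=> e_sym acyc uq sq i j ij jq; apply/negP => chord.
set c := drop i (take j.+1 q).
have c_size : size c = j.+1 - i by rewrite size_drop size_take; case: ltnP; lia.
have c_nth k : k < size c -> nth z c k = nth z q (i + k).
  by move=> kc; rewrite nth_drop nth_take //; lia.
apply: (negP (acyc c _ _)); first by rewrite drop_uniq // take_uniq.
  by rewrite c_size; lia.
have c_sorted : sorted e c by rewrite drop_sorted // take_sorted.
case: c c_size c_nth c_sorted => [|h t] //= c_size c_nth c_sorted.
rewrite rcons_path c_sorted /=.
have -> : last h t = nth z q j.
  rewrite (last_nth z) /= c_nth; last by [].
  by rewrite (_ : i + size t = j) //; lia.
by have := c_nth 0 isT; rewrite addn0 /= => ->; rewrite e_sym.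
Qed.

Lemma chordless_path_adjacency (T : finType) (e : rel T) (q : seq T) z :
  symmetric e -> irreflexive e -> sorted e q ->
  (forall i j, i.+2 <= j -> j < size q -> ~~ e (nth z q i) (nth z q j)) ->
  forall a b, a < size q -> b < size q ->
  e (nth z q a) (nth z q b) = (a.+1 == b) || (b.+1 == a).
Proof.
move=> e_sym e_irr sq chordless a b aq bq.
have step := sortedP z sq.
case: (ltngtP a b) => [lt|gt|<-]; last by rewrite e_irr orbb eq_sym ltn_eqF.
- have [ab|ne] := eqVneq a.+1 b; first by subst b; rewrite step.
  by rewrite /= (gtn_eqF (leqW lt)); apply/negbTE/chordless => //; lia.
- have [ba|ne] := eqVneq b.+1 a; first by subst a; rewrite orbT e_sym step.
  by rewrite orbF (gtn_eqF (leqW gt)) e_sym; apply/negbTE/chordless => //; lia.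
Qed.

(* A chordless path through every vertex exhibits the graph as a path graph,
   the position of a vertex along the path being its label. *)
Lemma spanning_chordless_path_graph (T : finType) (e : rel T) (q : seq T) z :
  symmetric e -> irreflexive e -> uniq q -> sorted e q -> (forall u, u \in q) ->
  (forall i j, i.+2 <= j -> j < size q -> ~~ e (nth z q i) (nth z q j)) ->
  is_path_graph e.
Proof.
move=> e_sym e_irr uq sq q_all chordless.
have q_size : size q = #|T| by rewrite -(card_uniqP uq); apply: eq_card.
have index_lt u : index u q < #|T| by rewrite -q_size index_mem.
exists (fun i : 'I_#|T| => nth z q i); split.
  exists (fun u => Ordinal (index_lt u)) => [i|u]; last by rewrite /= nth_index.
  by apply: val_inj; rewrite /= index_uniq // q_size.
by move=> i j; apply: chordless_path_adjacency; rewrite // q_size.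
Qed.

(* (=>, second half) A tree of maximum degree at most 2 is a path graph:
   a maximal path is closed under adjacency, hence spans the connected tree,
   and it is chordless by acyclicity. *)
Lemma max_degree2_tree_path_graph (T : finType) (e : rel T) :
  symmetric e -> irreflexive e -> is_tree e -> max_degree2 e -> is_path_graph e.
Proof.
move=> e_sym e_irr [T_gt0 conn acyc] deg2.
have [z _] := card_gt0P T_gt0.
have [q [uq sq size_q q_closed]] := maximal_path e_sym deg2 (p := [:: z]) isT isT.
have q_closure : closed e (mem q).
  move=> x y xy; apply/idP/idP => [xq | yq]; first exact: q_closed xq xy.
  by apply: q_closed yq _; rewrite e_sym.
have q_all u : u \in q.
  by rewrite -(closed_connect q_closure (conn (nth z q 0) u)) mem_nth.
exact: spanning_chordless_path_graph e_sym e_irr uq sq q_all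
         (acyclic_path_chordless z e_sym acyc uq sq).
Qed.

Unset Implicit Arguments.
Set Strict Implicit.

Theorem corollary1p9 (T : finType) (e : rel T)
  (e_sym : symmetric e) (e_irr : irreflexive e) (tree : is_tree e) :
  indep_complex_sortable e <-> is_path_graph e.
Proof.
split; last exact: path_graph_sortable.
move=> sortable; apply: max_degree2_tree_path_graph => //.
by case: tree => _ _ acyc; exact: sortable_acyclic_max_degree2.
Qed.
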